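(* Let $\alpha>-1$, $\alpha\ne0$, and let $\eta_1=\eta_1(\alpha)\in(0,1)$ be the root of the equation $\eta^\alpha=\dfrac{1}{1+\alpha(\eta+1)}$. Define for $0\le\eta\le1$ $$\psi_0(\alpha,\eta)=\dfrac{(1+\eta^{\alpha+1})^{1/\alpha}}{(1+\eta)^{(\alpha+1)/\alpha}}+\dfrac{(\alpha+1)^{(\alpha+1)/\alpha}}{\alpha}\left[\dfrac1{1+\eta^{\alpha+1}}-\dfrac1{1+\eta}\right],\qquad \psi_1(\alpha,\eta)=2\dfrac{(1+\eta^{\alpha+1})^{1/\alpha}}{(1+\eta)^{(\alpha+1)/\alpha}},$$ and let $\psi(\alpha,\eta)=\psi_0(\alpha,\eta)$ for $0\le\eta\le\eta_1$ and $\psi(\alpha,\eta)=\psi_1(\alpha,\eta)$ for $\eta_1\le\eta\le1$. Then $$\max_{0\le\eta\le1}\psi(\alpha,\eta)=\max_{0\le\eta\le\eta_1}\psi_0(\alpha,\eta).$$ *)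

From mathcomp Require Import all_boot all_order all_algebra.
From mathcomp Require Import all_classical all_reals all_analysis.
Set Implicit Arguments. Unset Strict Implicit. Unset Printing Implicit Defensive.
Import Order.TTheory GRing.Theory Num.Theory.
Local Open Scope ring_scope.

Definition psi0 (R : realType) (a e : R) : R :=
  (1 + e `^ (a + 1)) `^ (1 / a) / (1 + e) `^ ((a + 1) / a)
  + (a + 1) `^ ((a + 1) / a) / a * ((1 + e `^ (a + 1))^-1 - (1 + e)^-1).

Definition psi1 (R : realType) (a e : R) : R :=
  2 * ((1 + e `^ (a + 1)) `^ (1 / a) / (1 + e) `^ ((a + 1) / a)).

(* psi(alpha, eta) = psi0 on [0, eta1], psi1 on (eta1, 1]; at eta = eta1 we
   take psi0 (the paper's definition is piecewise with eta1 in both pieces). *)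
Definition psi (R : realType) (a eta1 e : R) : R :=
  if e <= eta1 then psi0 a e else psi1 a e.

From mathcomp Require Import all_boot all_order all_algebra.
From mathcomp Require Import all_classical all_reals all_analysis.
From mathcomp Require Import ring lra.
Set Implicit Arguments. Unset Strict Implicit.
Import Order.TTheory GRing.Theory Num.Theory.
Import numFieldNormedType.Exports.
Local Open Scope ring_scope.
Local Open Scope classical_set_scope.

(* With u = e / (1 + e) one has psi1 = 2 (u^(a+1) + (1-u)^(a+1))^(1/a).  As e
   runs over [0, 1], u increases from 0 to 1/2, where the symmetric power sum
   u^p + (1-u)^p decreases for p >= 1 (convexity) and increases for p <= 1
   (concavity); together with the sign of 1/a this makes psi1 nonincreasing on
   [0, 1].  The equation defining eta1 is exactly psi0 eta1 = psi1 eta1, so on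
   [eta1, 1] psi is dominated by psi0 eta1, while psi0 attains its maximum on
   [0, eta1] by continuity. *)

Lemma convex_powR_comb (R : realType) (p l x y : R) :
  1 <= p -> 0 <= l <= 1 -> 0 <= x -> 0 <= y ->
  (l * x + (1 - l) * y) `^ p <= l * x `^ p + (1 - l) * y `^ p.
Proof.
move=> p_ge1 /andP[l_ge0 l_le1] x_ge0 y_ge0.
have := @convex_powR R p p_ge1 (Itv01 l_ge0 l_le1) x y.
by rewrite !inE /= !in_itv /= !andbT => /(_ x_ge0 y_ge0); rewrite !convRE.
Qed.

Lemma concave_powR_comb (R : realType) (p l x y : R) :
  0 < p <= 1 -> 0 <= l <= 1 -> 0 <= x -> 0 <= y ->
  l * x `^ p + (1 - l) * y `^ p <= (l * x + (1 - l) * y) `^ p.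
Proof.
move=> /andP[p_gt0 p_le1] l01 x_ge0 y_ge0.
have /andP[l_ge0 l_le1] := l01.
have p_neq0 : p != 0 by rewrite gt_eqF.
have comb_ge0 (s t : R) : 0 <= s -> 0 <= t -> 0 <= l * s + (1 - l) * t.
  by move=> *; rewrite addr_ge0 // mulr_ge0 // subr_ge0.
(* x = (x^p)^(1/p), and powR with exponent 1/p >= 1 is convex. *)
have := convex_powR_comb (p:=p^-1) _ l01 (powR_ge0 x p) (powR_ge0 y p).
rewrite -!powRrM !mulfV // !powRr1 // invf_ge1 // => /(_ p_le1) conv.
have := ge0_ler_powR (ltW p_gt0) _ _ conv.
rewrite -powRrM mulVf // powRr1; last exact: comb_ge0 (powR_ge0 _ _) (powR_ge0 _ _).
by apply; rewrite nnegrE ?comb_ge0 ?powR_ge0.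
Qed.

Lemma between_sym_comb (R : realFieldType) (u v : R) : u <= v -> v <= 1 - u ->
  exists2 l, 0 <= l <= 1 & v = l * u + (1 - l) * (1 - u).
Proof.
move=> le_uv le_v1u; have [u_half|u_nhalf] := eqVneq (2 * u) 1.
  by exists 1; rewrite ?lexx ?ler01 //; lra.
have d_gt0 : 0 < 1 - 2 * u.
  by rewrite lt_neqAle eq_sym subr_eq0 eq_sym u_nhalf /=; lra.
exists ((1 - u - v) / (1 - 2 * u)); last by field; lra.
by rewrite divr_ge0 ?ler_pdivrMr ?mul1r /=; lra.
Qed.

Definition sympow (R : realType) (p u : R) : R := u `^ p + (1 - u) `^ p.

Lemma sympow_decreasing (R : realType) (p u v : R) :
  1 <= p -> 0 <= u -> u <= v -> v <= 1 - u -> sympow p v <= sympow p u.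
Proof.
move=> p_ge1 u_ge0 le_uv le_v1u.
have [l l01 ->] := between_sym_comb le_uv le_v1u.
have u1_ge0 : 0 <= 1 - u by lra.
rewrite /sympow.
have -> : 1 - (l * u + (1 - l) * (1 - u)) = l * (1 - u) + (1 - l) * u by ring.
have -> : u `^ p + (1 - u) `^ p = (l * u `^ p + (1 - l) * (1 - u) `^ p)
                                   + (l * (1 - u) `^ p + (1 - l) * u `^ p) by ring.
exact: lerD (convex_powR_comb p_ge1 l01 u_ge0 u1_ge0)
            (convex_powR_comb p_ge1 l01 u1_ge0 u_ge0).
Qed.

Lemma sympow_increasing (R : realType) (p u v : R) :
  0 < p <= 1 -> 0 <= u -> u <= v -> v <= 1 - u -> sympow p u <= sympow p v.
Proof.
move=> p01 u_ge0 le_uv le_v1u.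
have [l l01 ->] := between_sym_comb le_uv le_v1u.
have u1_ge0 : 0 <= 1 - u by lra.
rewrite /sympow.
have -> : 1 - (l * u + (1 - l) * (1 - u)) = l * (1 - u) + (1 - l) * u by ring.
have -> : u `^ p + (1 - u) `^ p = (l * u `^ p + (1 - l) * (1 - u) `^ p)
                                   + (l * (1 - u) `^ p + (1 - l) * u `^ p) by ring.
exact: lerD (concave_powR_comb p01 l01 u_ge0 u1_ge0)
            (concave_powR_comb p01 l01 u1_ge0 u_ge0).
Qed.

Lemma powRV (R : realType) (x r : R) : 0 <= x -> (x^-1) `^ r = (x `^ r)^-1.
Proof. by move=> x_ge0; rewrite -powR_inv1 // -powRrM mulN1r powRN. Qed.

Lemma psi1_sympow (R : realType) (a e : R) : 0 <= e ->
  psi1 a e = 2 * sympow (a + 1) (e / (1 + e)) `^ (1 / a).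
Proof.
move=> e_ge0; have e1_gt0 : 0 < 1 + e by lra.
have inv_ge0 : 0 <= (1 + e)^-1 by rewrite invr_ge0 ltW.
rewrite /psi1 /sympow.
have -> : 1 - e / (1 + e) = (1 + e)^-1 by field; lra.
rewrite powRM // powRV ?ltW // -[X in _ * _ + X]mul1r -mulrDl.
rewrite powRM ?invr_ge0 ?addr_ge0 ?powR_ge0 // powRV ?powR_ge0 //.
by rewrite -powRrM mul1r (addrC 1).
Qed.

Lemma psi1_nonincreasing (R : realType) (a t e : R) :
  -1 < a -> 0 <= t -> t <= e -> e <= 1 -> psi1 a e <= psi1 a t.
Proof.
move=> a_gtN1 t_ge0 le_te e_le1; have e_ge0 := le_trans t_ge0 le_te.
rewrite (psi1_sympow a e_ge0) (psi1_sympow a t_ge0) ler_pM2l; last by rewrite ltr0n.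
set ut := t / (1 + t); set ue := e / (1 + e).
have ut_ge0 : 0 <= ut by rewrite divr_ge0 //; lra.
have den_gt0 : 0 < (1 + t) * (1 + e) by rewrite mulr_gt0 //; lra.
have le_ut_ue : ut <= ue.
  rewrite -subr_ge0 (_ : ue - ut = (e - t) / ((1 + t) * (1 + e))).
    by apply: divr_ge0; [rewrite subr_ge0 | exact: ltW].
  by rewrite /ut /ue; field; lra.
have le_ue_1ut : ue <= 1 - ut.
  rewrite -subr_ge0 (_ : 1 - ut - ue = (1 - t * e) / ((1 + t) * (1 + e))).
    by apply: divr_ge0; [nra | exact: ltW].
  by rewrite /ut /ue; field; lra.
have ue_lt1 : ue < 1 by rewrite /ue ltr_pdivrMr; lra.
have sympow_gt0 (p u : R) : 0 <= u -> u < 1 -> 0 < sympow p u.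
  by move=> u_ge0 u_lt1; rewrite /sympow ltr_wpDl ?powR_ge0 ?powR_gt0 ?subr_gt0.
have sympow_ut_gt0 : 0 < sympow (a + 1) ut by rewrite sympow_gt0 //; lra.
have sympow_ue_gt0 : 0 < sympow (a + 1) ue by rewrite sympow_gt0 //; lra.
have [a_gt0|a_le0] := ltP 0 a.
  apply: ge0_ler_powR _ _ (ltW sympow_ue_gt0) (ltW sympow_ut_gt0) _.
    by rewrite divr_ge0 ?ler01 ?ltW.
  by apply: sympow_decreasing; rewrite ?ut_ge0 ?le_ut_ue ?le_ue_1ut; lra.
(* x^(1/a) = (x^(-1/a))^-1 with -1/a >= 0. *)
rewrite -[1 / a]opprK !(powRN _ (- (1 / a))).
rewrite lef_pV2 ?posrE; [| exact: powR_gt0 | exact: powR_gt0].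
apply: ge0_ler_powR _ _ (ltW sympow_ut_gt0) (ltW sympow_ue_gt0) _.
  by rewrite oppr_ge0 mul1r invr_le0.
by apply: sympow_increasing; rewrite ?ut_ge0 ?le_ut_ue ?le_ue_1ut; lra.
Qed.

Lemma powR1D (R : realType) (x r : R) : 0 < x -> x `^ (1 + r) = x * x `^ r.
Proof.
move=> x_gt0; rewrite powRD ?powRr1 //; first exact: ltW.
by apply/implyP => _; rewrite gt_eqF.
Qed.

Lemma psi0_eq_psi1_at_root (R : realType) (a t : R) : -1 < a -> a != 0 -> 0 < t ->
  t `^ a = (1 + a * (t + 1))^-1 -> psi0 a t = psi1 a t.
Proof.
move=> a_gtN1 a_neq0 t_gt0 root; set D := 1 + a * (t + 1).
have D_gt0 : 0 < D by rewrite -invr_gt0 -root powR_gt0.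
have t1_gt0 : 0 < 1 + t by lra.
have a1_gt0 : 0 < a + 1 by lra.
have powt : t `^ (a + 1) = t / D by rewrite addrC powR1D // root.
have sum_powt : 1 + t / D = (a + 1) * (1 + t) / D.
  by rewrite /D; field; rewrite -/D gt_eqF.
have root_inv : D^-1 `^ (1 / a) = t.
  by rewrite -root -powRrM mulrC mul1r mulVf // powRr1 // ltW.
rewrite /psi0 /psi1; have -> : (a + 1) / a = 1 + 1 / a by field.
rewrite powt sum_powt !powR1D // !powRM ?mulr_ge0 ?invr_ge0 ?ltW //.
rewrite root_inv; have S_gt0 : 0 < (1 + t) `^ (1 / a) by apply: powR_gt0.
by rewrite /D; field; rewrite a_neq0 !gt_eqF // -/D.
Qed.

Lemma continuous_powR (R : realType) (r x : R) : 0 < x ->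
  {for x, continuous (fun y : R => y `^ r)}.
Proof.
move=> x_gt0; apply/differentiable_continuous/derivable1_diffP.
by apply: derivable_powR; rewrite in_itv /= x_gt0.
Qed.

Lemma cvg_psi0 (R : realType) (F : set_system R) (FF : Filter F) (a x : R) :
  0 <= x -> (fun e => e) @ F --> x -> (fun e => e `^ (a + 1)) @ F --> x `^ (a + 1) ->
  psi0 a e @[e --> F] --> psi0 a x.
Proof.
move=> x_ge0 cvg_e cvg_pow.
have pow1_gt0 : 0 < 1 + x `^ (a + 1) by have := powR_ge0 x (a + 1); lra.
have x1_gt0 : 0 < 1 + x by lra.
have cvg_pow1 : (fun e => 1 + e `^ (a + 1)) @ F --> 1 + x `^ (a + 1).
  exact: cvgD (cvg_cst _) cvg_pow.
have cvg_e1 : (fun e => 1 + e) @ F --> 1 + x by exact: cvgD (cvg_cst _) cvg_e.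
apply: cvgD.
  apply: cvgM.
    exact: continuous_cvg _ (continuous_powR (r:=1 / a) pow1_gt0) cvg_pow1.
  apply: cvgV; first by rewrite gt_eqF ?powR_gt0.
  exact: continuous_cvg _ (continuous_powR (r:=(a + 1) / a) x1_gt0) cvg_e1.
by apply: cvgMl_tmp; apply: cvgB; apply: cvgV; rewrite ?gt_eqF.
Qed.

Lemma continuous_psi0_itv (R : realType) (a t : R) : -1 < a -> 0 < t ->
  {within `[0, t], continuous (psi0 a)}.
Proof.
move=> a_gtN1 t_gt0.
have psi0_cont x : 0 < x -> {for x, continuous (psi0 a)}.
  by move=> x_gt0; apply: cvg_psi0 (ltW x_gt0) cvg_id (continuous_powR x_gt0).
apply/continuous_within_itvP => //; split.
- by move=> x; rewrite in_itv /= => /andP[x_gt0 _]; apply: psi0_cont.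
- apply: cvg_psi0 (cvg_at_right_filter cvg_id) _ => //.
  have a1_gt0 : 0 < a + 1 by lra.
  by rewrite powR0 ?gt_eqF //; apply: powR_cvg0.
- exact: cvg_at_left_filter (psi0_cont t t_gt0).
Qed.

Theorem corollary2p4 (R : realType) (a eta1 : R) :
  -1 < a -> a != 0 ->
  0 < eta1 < 1 ->
  eta1 `^ a = (1 + a * (eta1 + 1))^-1 ->
  exists2 es : R, 0 <= es <= eta1 &
    (forall e : R, 0 <= e <= eta1 -> psi0 a e <= psi0 a es) /\
    (forall e : R, 0 <= e <= 1 -> psi a eta1 e <= psi0 a es).
Proof.
move=> a_gtN1 a_neq0 /andP[eta1_gt0 _] root.
have [es es_itv es_max] :=
  EVT_max (ltW eta1_gt0) (continuous_psi0_itv a_gtN1 eta1_gt0).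
have psi0_le_max e : 0 <= e <= eta1 -> psi0 a e <= psi0 a es.
  by move=> e_itv; apply: es_max; rewrite in_itv.
exists es; first by move: es_itv; rewrite in_itv.
split=> // e /andP[e_ge0 e_le1]; rewrite /psi; case: ifPn => [e_le_eta1|].
  by apply: psi0_le_max; rewrite e_ge0.
rewrite -ltNge => /ltW eta1_le_e.
apply: le_trans (psi0_le_max eta1 _); last by rewrite lexx ltW.
rewrite psi0_eq_psi1_at_root //.
exact: psi1_nonincreasing (ltW eta1_gt0) eta1_le_e e_le1.
Qed.
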